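(* Let $p$ be a prime with $p\equiv 1$ or $7\pmod 8$, and let $\mathfrak{p}$ be a prime ideal of $\mathbb{Z}[\sqrt2]$ lying over $p$. Let $(a_p,b_p)$ be the solution of $a^2-2b^2=p$ in positive integers with $a_p$ minimal. Then $$\lambda_1\big(\Sigma_{\mathbb{Q}(\sqrt2)}(\mathfrak{p})\big)=\sqrt{2}\,\min\left(\sqrt{2a_p^2-p},\ \sqrt{6a_p^2-4\sqrt2\,a_p\sqrt{a_p^2-p}-3p}\right).$$
   Context: The canonical embedding of $\mathbb{Q}(\sqrt2)$ is $\Sigma_{\mathbb{Q}(\sqrt2)}(x)=(x,\tau(x))$, where $\tau(\sqrt2)=-\sqrt2$, with $\|\Sigma_{\mathbb{Q}(\sqrt2)}(x)\|^2=x^2+\tau(x)^2$. For a nonzero ideal $I$, $\lambda_1(\Sigma_{\mathbb{Q}(\sqrt2)}(I))=\min_{0\ne x\in I}\|\Sigma_{\mathbb{Q}(\sqrt2)}(x)\|$. *)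

From HB Require Import structures.
From mathcomp Require Import all_boot all_order all_algebra.
From mathcomp Require Import all_classical all_reals.
Set Implicit Arguments. Unset Strict Implicit. Unset Printing Implicit Defensive.
Import Order.TTheory GRing.Theory Num.Theory.
Local Open Scope ring_scope.
Local Open Scope classical_set_scope.

(* The ring Z[sqrt 2]: the pair (x, y) represents x + y * sqrt 2. *)
Definition zs2 := (int * int)%type.
Definition zs2_add (u v : zs2) : zs2 := (u.1 + v.1, u.2 + v.2).
Definition zs2_mul (u v : zs2) : zs2 :=
  (u.1 * v.1 + 2 * u.2 * v.2, u.1 * v.2 + u.2 * v.1).
Definition zs2_zero : zs2 := (0, 0).
Definition zs2_one : zs2 := (1, 0).

Definition is_ideal (I : zs2 -> Prop) : Prop :=
  [/\ I zs2_zero,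
      (forall u v, I u -> I v -> I (zs2_add u v)) &
      (forall r u, I u -> I (zs2_mul r u))].

Definition is_prime_ideal (I : zs2 -> Prop) : Prop :=
  [/\ is_ideal I, ~ I zs2_one &
      (forall u v, I (zs2_mul u v) -> I u \/ I v)].

Definition lies_over (I : zs2 -> Prop) (p : nat) : Prop :=
  forall n : int, I (n, 0) <-> (p%:Z %| n)%Z.

Definition sigma_emb (R : realType) (u : zs2) : R * R :=
  (u.1%:~R + u.2%:~R * Num.sqrt 2, u.1%:~R - u.2%:~R * Num.sqrt 2).

Definition sigma_norm (R : realType) (u : zs2) : R :=
  Num.sqrt ((sigma_emb R u).1 ^+ 2 + (sigma_emb R u).2 ^+ 2).

Definition lambda1 (R : realType) (I : zs2 -> Prop) : R :=
  inf [set r : R | exists u, [/\ I u, u <> zs2_zero & r = sigma_norm R u]].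

(* Write N(c + d√2) = c² − 2d², so that ‖Σ(c + d√2)‖² = 2c² + 4d² ≥ 2|N(c + d√2)|.
   The claimed minimum is the smaller of the squared lengths of a + b√2 and of
   (a − b√2)(1 + √2) = (a − 2b) + (a − b)√2; since P is prime over p it contains
   a + b√2 or a − b√2, and with it an element of each of these two lengths.
   Conversely a nonzero element of P has norm qp with q ≠ 0, as √2 is irrational.
   If |q| ≥ 2 its squared length is at least 4p, which is already at least one of
   the two candidates.  If q = 1 then |c| ≥ a by the minimality of a, so the
   squared length 4c² − 2p is at least that of a + b√2.  If q = −1 the element is
   (a ± b√2) times a unit of norm −1, which forces |c| ≥ a − 2b. *)

From HB Require Import structures.
From mathcomp Require Import all_boot all_order all_algebra.
From mathcomp Require Import all_classical all_reals.
From mathcomp Require Import zify ring.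
Set Implicit Arguments.
Unset Strict Implicit.
Unset Printing Implicit Defensive.

Import Order.TTheory GRing.Theory Num.Theory.
Local Open Scope ring_scope.

Lemma sqr_neq_prime (p : nat) (s : int) : prime p -> s ^+ 2 <> p%:Z.
Proof.
move=> pp /(congr1 absz); rewrite abszX /= => /(congr1 (logn p)).
rewrite lognX (logn_prime _ pp) eqxx; lia.
Qed.

Lemma sqr_eq_twice_sqr (c d : int) : c ^+ 2 = 2 * d ^+ 2 -> d = 0.
Proof.
move=> /(congr1 absz); rewrite abszM !abszX /= => e.
apply/eqP; rewrite -absz_eq0; apply/negPn/negP => d0.
move/(congr1 (logn 2)): e.
rewrite lognM ?expn_gt0 ?lt0n ?d0 // !lognX (logn_prime _ (isT : prime 2)) /=.
lia.
Qed.

Definition zs2_norm (u : zs2) : int := u.1 ^+ 2 - 2 * u.2 ^+ 2.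

Definition sigma_sqnorm (u : zs2) : int := 2 * u.1 ^+ 2 + 4 * u.2 ^+ 2.

Lemma zs2_mul_conj (u : zs2) : zs2_mul (u.1, - u.2) u = (zs2_norm u, 0).
Proof. by rewrite /zs2_mul /zs2_norm /=; congr pair; ring. Qed.

Lemma zs2_norm_eq0 (u : zs2) : zs2_norm u = 0 -> u = zs2_zero.
Proof.
case: u => c d /eqP; rewrite subr_eq0 => /eqP /= e.
have d0 := sqr_eq_twice_sqr e; move: e; rewrite d0 expr0n mulr0 => /eqP.
by rewrite sqrf_eq0 => /eqP ->.
Qed.

Lemma sigma_sqnorm_ge_norm (u : zs2) : 2 * `|zs2_norm u| <= sigma_sqnorm u.
Proof.
rewrite /zs2_norm /sigma_sqnorm.
by case: (lerP 0 (u.1 ^+ 2 - 2 * u.2 ^+ 2)) => h; [rewrite ger0_norm | rewrite ltr0_norm]; nia.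
Qed.

Lemma Euclid_dvdzM (p : nat) (m n : int) : prime p ->
  (p%:Z %| m * n)%Z = (p%:Z %| m)%Z || (p%:Z %| n)%Z.
Proof. by move=> pp; rewrite !dvdzE abszM Euclid_dvdM. Qed.

Section MinimalSolution.

Variables (p : nat) (a b : int).
Hypotheses (p_prime : prime p) (p_odd : odd p) (a_gt0 : 0 < a) (b_gt0 : 0 < b).
Hypothesis ab_norm : zs2_norm (a, b) = p%:Z.
Hypothesis a_min :
  forall a' b', 0 < a' -> 0 < b' -> zs2_norm (a', b') = p%:Z -> a <= a'.

Lemma twice_b_le_a : 2 * b <= a.
Proof.
have ab_n : a ^+ 2 - 2 * b ^+ 2 = p%:Z := ab_norm.
(* (a - b√2)(3 + 2√2) = (3a - 4b) + (2a - 3b)√2 is another solution. *)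
have b'0 : 3 * b - 2 * a != 0.
  by apply/eqP => e; apply: (sqr_neq_prime (s := a - b) p_prime); rewrite -ab_n; nia.
suff : a <= 3 * a - 4 * b by lia.
apply: (a_min (b' := `|3 * b - 2 * a|)); rewrite ?normr_gt0 //; first nia.
by rewrite /zs2_norm /= real_normK ?num_real // -ab_n; ring.
Qed.

Lemma norm_p_sqr_ge (c d : int) : zs2_norm (c, d) = p%:Z -> a ^+ 2 <= c ^+ 2.
Proof.
rewrite /zs2_norm /= => cd_norm.
have c0 : c != 0 by apply/eqP => c0; move: cd_norm; rewrite c0; nia.
have d0 : d != 0.
  by apply/eqP => d0; apply: (sqr_neq_prime (s := c) p_prime); rewrite -cd_norm d0; ring.
have := a_min (a' := `|c|) (b' := `|d|); rewrite !normr_gt0 c0 d0 /zs2_norm /=.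
rewrite !real_normK ?num_real // => /(_ isT isT cd_norm) ac.
by rewrite -[c ^+ 2]real_normK ?num_real // ler_pXn2r // ?nnegrE ltW.
Qed.

Lemma norm_Np_associate (c d : int) : zs2_norm (c, d) = - p%:Z ->
  exists s (w : zs2),
    [/\ s = b \/ s = - b, zs2_norm w = -1 & (c, d) = zs2_mul (a, s) w].
Proof.
move=> cd_norm.
have pz0 : p%:Z != 0 by rewrite eqz_nat -lt0n prime_gt0.
have [s [s_pm s_dvd]] : exists s, (s = b \/ s = - b) /\ (p%:Z %| a * c - 2 * s * d)%Z.
  (* (ac - 2bd)(ac + 2bd) = p(c² - 2b²) *)
  have : (p%:Z %| (a * c - 2 * b * d) * (a * c + 2 * b * d))%Z.
    apply/dvdzP; exists (c ^+ 2 - 2 * b ^+ 2).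
    by move: ab_norm cd_norm; rewrite /zs2_norm /= => ab_n cd_n; nia.
  rewrite Euclid_dvdzM // => /orP [h | h]; [exists b | exists (- b)].
    by split; [left |].
  by split; [right | rewrite mulrN mulNr opprK].
have s2 : s ^+ 2 = b ^+ 2 by case: s_pm => ->; rewrite ?sqrrN.
move: ab_norm cd_norm; rewrite /zs2_norm /= => ab_n cd_n.
(* X + Y√2 = (c + d√2)(a - s√2) has norm -p² and p | X, hence p | Y, and
   (X + Y√2)/p is the unit of norm -1 we are looking for. *)
set X := a * c - 2 * s * d in s_dvd *; set Y := a * d - s * c.
have XY_norm : X ^+ 2 - 2 * Y ^+ 2 = - p%:Z ^+ 2.
  have -> : - p%:Z ^+ 2 = (a ^+ 2 - 2 * s ^+ 2) * (c ^+ 2 - 2 * d ^+ 2).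
    by rewrite s2 ab_n cd_n; ring.
  rewrite /X /Y; ring.
have [u X_eq] := dvdzP s_dvd.
have : (p%:Z %| 2 * (Y * Y))%Z.
  apply/dvdzP; exists (p%:Z * (u ^+ 2 + 1)).
  have -> : 2 * (Y * Y) = X ^+ 2 - (X ^+ 2 - 2 * Y ^+ 2) by ring.
  by rewrite XY_norm X_eq; ring.
rewrite !Euclid_dvdzM // orbb => /orP [p_dvd2 | /dvdzP [v Y_eq]].
  by move: p_dvd2 p_odd; rewrite dvdzE (dvdn_prime2 p_prime (isT : prime 2)) => /eqP ->.
exists s, (u, v); split => //.
  apply: (mulIf (expf_neq0 2 pz0)).
  by rewrite mulN1r -XY_norm X_eq Y_eq /zs2_norm /=; ring.
rewrite /zs2_mul /=; congr pair; apply: (mulIf pz0).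
  by rewrite mulrDl -!mulrA -X_eq -Y_eq -ab_n -s2 /X /Y; ring.
by rewrite mulrDl -!mulrA -X_eq -Y_eq -ab_n -s2 /X /Y; ring.
Qed.

Lemma unit_multiple_ge (s u v : int) : s = b \/ s = - b -> zs2_norm (u, v) = -1 ->
  0 < a * u + 2 * s * v -> 0 < a * v + s * u -> a - 2 * b <= a * u + 2 * s * v.
Proof.
rewrite /zs2_norm /= => s_pm uv_norm c_gt0 d_gt0.
have ba := twice_b_le_a.
(* Only u, v > 0 survives the sign analysis, and there u >= v. *)
have vu : v ^+ 2 <= u ^+ 2 by nia.
have v0 : v != 0 by apply/eqP => v0; move: uv_norm; rewrite v0; nia.
by case: s_pm => s_eq; rewrite s_eq in c_gt0 d_gt0 *;
  case: (lerP 0 u) => u_sgn; case: (lerP 0 v) => v_sgn; nia.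
Qed.

Lemma norm_Np_sqr_ge (c d : int) : zs2_norm (c, d) = - p%:Z -> (a - 2 * b) ^+ 2 <= c ^+ 2.
Proof.
move=> cd_norm.
have c0 : c != 0.
  apply/eqP => c0; move: cd_norm p_odd; rewrite c0 /zs2_norm /= expr0n /= sub0r => /oppr_inj.
  by move/(congr1 absz); rewrite abszM abszX /= => <-; rewrite oddM.
have d0 : d != 0 by apply/eqP => d0; move: cd_norm; rewrite d0 /zs2_norm /=; nia.
have abs_norm : zs2_norm (`|c|, `|d|) = - p%:Z by rewrite /zs2_norm /= !real_normK ?num_real.
have [s [[u v] [s_pm uv_norm [c_eq d_eq]]]] := norm_Np_associate abs_norm.
have := unit_multiple_ge s_pm uv_norm; rewrite -c_eq -d_eq !normr_gt0 c0 d0 => /(_ isT isT) ac.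
have := twice_b_le_a; rewrite -subr_ge0 => ab0.
by rewrite -[c ^+ 2]real_normK ?num_real // ler_pXn2r // ?nnegrE // (le_trans ab0).
Qed.

Lemma min_sqnorm_le_4p :
  sigma_sqnorm (a, b) <= 4 * p%:Z \/ sigma_sqnorm (a - 2 * b, a - b) <= 4 * p%:Z.
Proof.
have ba := twice_b_le_a.
rewrite /sigma_sqnorm /= -ab_norm /zs2_norm /=.
case: (lerP (6 * b ^+ 2) (a ^+ 2)) => h; [left | right]; first nia.
have : a < 3 * b by nia.
nia.
Qed.

Lemma ideal_sigma_sqnorm_ge (P : zs2 -> Prop) (u : zs2) :
  is_ideal P -> lies_over P p -> P u -> u <> zs2_zero ->
  sigma_sqnorm (a, b) <= sigma_sqnorm u \/ sigma_sqnorm (a - 2 * b, a - b) <= sigma_sqnorm u.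
Proof.
case: u => c d [_ _ P_mul] P_over Pu u0.
have /(P_over _).1 /dvdzP [q N_eq] : P (zs2_norm (c, d), 0).
  by rewrite -zs2_mul_conj; apply: P_mul.
have q0 : q != 0.
  by apply: contra_notN u0 => /eqP q0; apply: zs2_norm_eq0; rewrite N_eq q0 mul0r.
have [q1 | [qN1 | q_ge2]] : q = 1 \/ q = -1 \/ 2 <= `|q| by lia.
- left; have : a ^+ 2 <= c ^+ 2 by apply: (@norm_p_sqr_ge c d); rewrite N_eq q1 mul1r.
  by move: N_eq; rewrite q1 /sigma_sqnorm /zs2_norm /= -ab_norm /zs2_norm /=; nia.
- right; have : (a - 2 * b) ^+ 2 <= c ^+ 2.
    by apply: (@norm_Np_sqr_ge c d); rewrite N_eq qN1 mulN1r.
  by move: N_eq; rewrite qN1 /sigma_sqnorm /zs2_norm /= -ab_norm /zs2_norm /=; nia.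
- have := sigma_sqnorm_ge_norm (c, d); rewrite N_eq normrM [`|p%:Z|]ger0_norm // => h.
  by case: min_sqnorm_le_4p => h'; [left | right]; nia.
Qed.

Lemma prime_ideal_short_elements (P : zs2 -> Prop) : is_prime_ideal P -> lies_over P p ->
  exists v w, [/\ P v /\ P w, v <> zs2_zero /\ w <> zs2_zero,
    sigma_sqnorm v = sigma_sqnorm (a, b) &
    sigma_sqnorm w = sigma_sqnorm (a - 2 * b, a - b)].
Proof.
case=> [[_ _ P_mul] _ P_prime] P_over.
have ba := twice_b_le_a.
have : P (zs2_mul (a, - b) (a, b)) by rewrite (zs2_mul_conj (a, b)) ab_norm; apply/P_over.
case/P_prime => [Pv | Pv]; [exists (a, - b), (zs2_mul (1, 1) (a, - b)) |
                           exists (a, b), (zs2_mul (-1, 1) (a, b))].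
- split; [by split => //; apply: P_mul | by split; case; lia |
          by rewrite /sigma_sqnorm sqrrN | by rewrite /sigma_sqnorm /zs2_mul /=; ring].
- split; [by split => //; apply: P_mul | by split; case; lia |
          by [] | by rewrite /sigma_sqnorm /zs2_mul /=; ring].
Qed.

End MinimalSolution.

Section Embedding.

Variable R : realType.

Lemma sigma_normE (u : zs2) : sigma_norm R u = Num.sqrt (sigma_sqnorm u)%:~R.
Proof.
rewrite /sigma_norm /sigma_emb /sigma_sqnorm /=; congr Num.sqrt.
have s2 : Num.sqrt (2 : R) ^+ 2 = 2 by rewrite sqr_sqrtr // ler0n.
transitivity (2 * u.1%:~R ^+ 2 + 2 * u.2%:~R ^+ 2 * Num.sqrt (2 : R) ^+ 2 : R); first ring.
by rewrite s2; ring.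
Qed.

Lemma lambda1_eq_min (P : zs2 -> Prop) (v w : zs2) :
  P v -> v <> zs2_zero -> P w -> w <> zs2_zero ->
  (forall u, P u -> u <> zs2_zero ->
     sigma_sqnorm v <= sigma_sqnorm u \/ sigma_sqnorm w <= sigma_sqnorm u) ->
  lambda1 R P = Num.min (sigma_norm R v) (sigma_norm R w).
Proof.
move=> Pv v0 Pw w0 sqnorm_ge.
set m := Num.min _ _.
have lb : lbound [set r | exists u, [/\ P u, u <> zs2_zero & r = sigma_norm R u]] m.
  move=> _ [u [Pu u0 ->]]; rewrite ge_min !sigma_normE.
  by case: (sqnorm_ge u Pu u0) => h; apply/orP; [left | right]; rewrite ler_wsqrtr // ler_int.
have attained : exists u, [/\ P u, u <> zs2_zero & m = sigma_norm R u].
  by rewrite /m; case: leP => _; [exists v | exists w].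
apply/le_anti/andP; split; first by apply: ge_inf => //; exists m.
by apply: lb_le_inf => //; exists m.
Qed.

Lemma closed_form_min_sigma_norm (p : nat) (a b : int) : 0 <= b -> zs2_norm (a, b) = p%:Z ->
  Num.sqrt 2 *
  Num.min (Num.sqrt (2 * a%:~R ^+ 2 - p%:R))
          (Num.sqrt (6 * a%:~R ^+ 2
                     - 4 * Num.sqrt 2 * a%:~R * Num.sqrt (a%:~R ^+ 2 - p%:R)
                     - 3 * p%:R)) =
  Num.min (sigma_norm R (a, b)) (sigma_norm R (a - 2 * b, a - b)) :> R.
Proof.
move=> b_ge0 ab_norm.
have pE : p%:R = a%:~R ^+ 2 - 2 * b%:~R ^+ 2 :> R.
  by rewrite -[p%:R]/((p%:Z)%:~R) -ab_norm /zs2_norm /=; ring.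
have s2 : Num.sqrt (2 : R) ^+ 2 = 2 by rewrite sqr_sqrtr // ler0n.
have -> : Num.sqrt (a%:~R ^+ 2 - p%:R) = Num.sqrt 2 * b%:~R :> R.
  rewrite pE (_ : _ - _ = 2 * b%:~R ^+ 2); last ring.
  by rewrite sqrtrM ?ler0n // sqrtr_sqr ger0_norm // ler0z.
rewrite minr_pMr ?sqrtr_ge0 // -!sqrtrM ?ler0n // !sigma_normE /sigma_sqnorm /=.
congr (Num.min (Num.sqrt _) (Num.sqrt _)); rewrite pE; first ring.
have -> : 4 * Num.sqrt 2 * a%:~R * (Num.sqrt 2 * b%:~R) = 4 * Num.sqrt 2 ^+ 2 * a%:~R * b%:~R :> R
  by ring.
by rewrite s2; ring.
Qed.

End Embedding.

Theorem theorem7 (R : realType) (p : nat) (P : zs2 -> Prop) (a b : int) :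
  prime p ->
  (p %% 8 = 1 \/ p %% 8 = 7)%N ->
  is_prime_ideal P ->
  lies_over P p ->
  0 < a -> 0 < b -> a ^+ 2 - 2 * b ^+ 2 = p%:Z ->
  (forall a' b' : int, 0 < a' -> 0 < b' -> a' ^+ 2 - 2 * b' ^+ 2 = p%:Z -> a <= a') ->
  lambda1 R P =
    Num.sqrt 2 *
    Num.min (Num.sqrt (2 * a%:~R ^+ 2 - p%:R))
            (Num.sqrt (6 * a%:~R ^+ 2
                       - 4 * Num.sqrt 2 * a%:~R * Num.sqrt (a%:~R ^+ 2 - p%:R)
                       - 3 * p%:R)).
Proof.
move=> p_prime p8 P_prime P_over a_gt0 b_gt0 ab_norm a_min.
have p_odd : odd p by case: p8 => p8; rewrite (divn_eq p 8) p8 oddD oddM andbF.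
have [v [w [[Pv Pw] [v0 w0] sqv sqw]]] :=
  prime_ideal_short_elements p_prime p_odd a_gt0 b_gt0 ab_norm a_min P_prime P_over.
rewrite (closed_form_min_sigma_norm R (ltW b_gt0) ab_norm) (lambda1_eq_min R Pv v0 Pw w0).
  by rewrite !sigma_normE sqv sqw.
move=> u Pu u0; rewrite sqv sqw.
by case: P_prime => P_ideal _ _; apply: ideal_sigma_sqnorm_ge P_ideal P_over Pu u0.
Qed.
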